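(* For every $\varepsilon>0$ and every $1<p<\infty$, letting $q$ satisfy $1/p+1/q=1$, there exist $N\in\mathbb{N}$ and positive numbers $a_1\ge a_2\ge\dots\ge a_N>0$ such that $$\sum_{n=1}^N a_n>\varepsilon^{-2}\qquad\text{and}\qquad \sum_{n=1}^N\Big(\sum_{j=n}^N a_j^q\Big)^{p/q}<\varepsilon^p.$$ *)

From Stdlib Require Import Reals.
Open Scope R_scope.

Fixpoint sum_range (f : nat -> R) (m k : nat) : R :=
  match k with
  | O => 0
  | S k' => f m + sum_range f (S m) k'
  end.
Definition sum_from_to (f : nat -> R) (m n : nat) : R :=
  sum_range f m (S n - m).

(* Take a_j = c/j on 1..N.  Then sum a = c H_N with H_N the harmonic number, while
   comparison with an integral gives sum_{j>=n} j^-q <= p n^(1-q), so the n-th inner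
   term is at most c^p K / n with K = p^(p/q), and the second sum is at most c^p K H_N.
   Normalizing c = B / H_N with B = 2/eps^2 makes the first sum B and the second
   B^p K / H_N^(p-1), which is below eps^p once H_N (which grows like ln N) is large. *)
From Stdlib Require Import Reals Lra Lia.
Open Scope R_scope.

Lemma ln_le_sub_1 (x : R) : 0 < x -> ln x <= x - 1.
Proof. intros Hx; pose proof (exp_ineq1_le (ln x)); rewrite exp_ln in * by exact Hx; lra. Qed.

Lemma ln_ge_1_sub_inv (x : R) : 0 < x -> 1 - / x <= ln x.
Proof.
  intros Hx; pose proof (ln_le_sub_1 (/ x) (Rinv_0_lt_compat _ Hx)).
  rewrite ln_Rinv in * by exact Hx; lra.
Qed.

Lemma Rpower_pos (x y : R) : 0 < Rpower x y.
Proof. apply exp_pos. Qed.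

Lemma Rpower_ge_1_add_ln (x y : R) : 1 + y * ln x <= Rpower x y.
Proof. apply exp_ineq1_le. Qed.

Lemma Rpower_div (c x y : R) : 0 < c -> 0 < x ->
  Rpower (c / x) y = Rpower c y * Rpower x (- y).
Proof.
  intros Hc Hx; unfold Rpower, Rdiv.
  rewrite <- exp_plus, ln_mult, ln_Rinv by auto using Rinv_0_lt_compat.
  f_equal; ring.
Qed.

Lemma Rpower_inv_exponent (x y : R) : 0 < x -> y <> 0 -> Rpower (Rpower x (/ y)) y = x.
Proof. intros Hx Hy; rewrite Rpower_mult, Rinv_l, Rpower_1 by auto; reflexivity. Qed.

Lemma sum_range_le (f g : nat -> R) (m k : nat) :
  (forall i, (m <= i < m + k)%nat -> f i <= g i) ->
  sum_range f m k <= sum_range g m k.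
Proof.
  revert m; induction k as [|k IH]; intros m Hfg; simpl; [lra|].
  apply Rplus_le_compat; [apply Hfg; lia|].
  apply IH; intros i Hi; apply Hfg; lia.
Qed.

Lemma sum_range_ext (f g : nat -> R) (m k : nat) :
  (forall i, (m <= i < m + k)%nat -> f i = g i) ->
  sum_range f m k = sum_range g m k.
Proof.
  intros Hfg; apply Rle_antisym; apply sum_range_le;
    intros i Hi; rewrite (Hfg i Hi); apply Rle_refl.
Qed.

Lemma sum_range_pos (f : nat -> R) (m k : nat) :
  (forall i, (m <= i < m + k)%nat -> 0 < f i) -> (0 < k)%nat ->
  0 < sum_range f m k.
Proof.
  revert m; induction k as [|[|k] IH]; intros m Hf Hk; simpl in *; [lia| |].
  - rewrite Rplus_0_r; apply Hf; lia.
  - apply Rplus_lt_0_compat; [apply Hf; lia|].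
    apply IH; [intros i Hi; apply Hf|]; lia.
Qed.

Lemma sum_range_mulr (c : R) (f : nat -> R) (m k : nat) :
  sum_range (fun j => c * f j) m k = c * sum_range f m k.
Proof. revert m; induction k as [|k IH]; intros m; simpl; [ring | rewrite IH; ring]. Qed.

Lemma sum_from_to_1 (f : nat -> R) (N : nat) : sum_from_to f 1 N = sum_range f 1 N.
Proof. unfold sum_from_to; f_equal; lia. Qed.

Definition harmonic (N : nat) : R := sum_from_to (fun j => / INR j) 1 N.

Lemma ln_le_harmonic_range (m k : nat) : (1 <= m)%nat ->
  ln (INR (m + k)) - ln (INR m) <= sum_range (fun j => / INR j) m k.
Proof.
  revert m; induction k as [|k IH]; intros m Hm; simpl.
  - rewrite Nat.add_0_r; lra.
  - specialize (IH (S m) ltac:(lia)).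
    replace (m + S k)%nat with (S m + k)%nat by lia.
    assert (Hm0 : 0 < INR m) by (apply lt_0_INR; lia).
    assert (Hstep : ln (INR (S m)) - ln (INR m) <= / INR m).
    { rewrite S_INR.
      pose proof (ln_le_sub_1 ((INR m + 1) / INR m)
                    ltac:(apply Rdiv_lt_0_compat; lra)) as Hln.
      unfold Rdiv in Hln; rewrite ln_mult, ln_Rinv in Hln by auto using Rinv_0_lt_compat with real.
      replace ((INR m + 1) * / INR m - 1) with (/ INR m) in Hln by (field; lra).
      lra. }
    lra.
Qed.

Lemma harmonic_unbounded (M : R) : exists N, M < harmonic N.
Proof.
  destruct (INR_unbounded (exp M)) as [N HN].
  pose proof (exp_pos M) as HeM.
  exists N.
  pose proof (ln_le_harmonic_range 1 N (le_n 1)) as Hh.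
  change (INR 1) with 1 in Hh; rewrite ln_1, Rminus_0_r in Hh.
  assert (HlnN : M < ln (INR (1 + N))).
  { rewrite <- (ln_exp M) at 1; apply ln_increasing; [exact HeM|].
    rewrite plus_INR; simpl; lra. }
  unfold harmonic; rewrite sum_from_to_1; lra.
Qed.

(* The integral comparison step: (x+1)^-(s+1) is at most the integral of t^-(s+1)
   over [x, x+1]. *)
Lemma Rpower_telescope_step (s x : R) : 0 < s -> 0 < x ->
  s * Rpower (x + 1) (- (s + 1)) <= Rpower x (- s) - Rpower (x + 1) (- s).
Proof.
  intros Hs Hx.
  set (E := Rpower (x + 1) (- s)).
  set (R1 := Rpower ((x + 1) / x) s).
  assert (HE : 0 < E) by apply Rpower_pos.
  assert (Hx_eq : Rpower x (- s) = E * R1).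
  { unfold E, R1; rewrite Rpower_div by lra.
    rewrite <- Rmult_assoc, <- Rpower_plus, Rplus_opp_l, Rpower_O by lra; ring. }
  assert (Hx1_eq : Rpower (x + 1) (- (s + 1)) = E * / (x + 1)).
  { unfold E; replace (- (s + 1)) with (- s + - (1)) by ring.
    rewrite Rpower_plus, (Rpower_Ropp _ 1), Rpower_1 by lra; reflexivity. }
  assert (Hln : / (x + 1) <= ln ((x + 1) / x)).
  { pose proof (ln_ge_1_sub_inv ((x + 1) / x) ltac:(apply Rdiv_lt_0_compat; lra)).
    replace (1 - / ((x + 1) / x)) with (/ (x + 1)) in * by (field; lra); assumption. }
  assert (HR1 : 1 + s * / (x + 1) <= R1).
  { pose proof (Rpower_ge_1_add_ln ((x + 1) / x) s).
    pose proof (Rmult_le_compat_l s _ _ (Rlt_le _ _ Hs) Hln). unfold R1; lra. }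
  rewrite Hx_eq, Hx1_eq.
  pose proof (Rmult_le_compat_l E _ _ (Rlt_le _ _ HE) HR1); nra.
Qed.

Lemma p_series_tail_succ (s : R) (n k : nat) : 0 < s -> (1 <= n)%nat ->
  sum_range (fun j => Rpower (INR j) (- (s + 1))) (S n) k <= / s * Rpower (INR n) (- s).
Proof.
  intros Hs; revert n; induction k as [|k IH]; intros n Hn; cbn [sum_range].
  - apply Rmult_le_pos; [apply Rlt_le, Rinv_0_lt_compat, Hs | apply Rlt_le, Rpower_pos].
  - specialize (IH (S n) ltac:(lia)).
    pose proof (Rpower_telescope_step s (INR n) Hs ltac:(apply lt_0_INR; lia)) as Hstep.
    rewrite <- S_INR in Hstep.
    apply (Rmult_le_compat_l (/ s)) in Hstep; [|apply Rlt_le, Rinv_0_lt_compat, Hs].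
    rewrite <- Rmult_assoc, Rinv_l, Rmult_1_l, Rmult_minus_distr_l in Hstep by lra; lra.
Qed.

Lemma p_series_tail (s : R) (n k : nat) : 0 < s -> (1 <= n)%nat ->
  sum_range (fun j => Rpower (INR j) (- (s + 1))) n k <= (1 + / s) * Rpower (INR n) (- s).
Proof.
  intros Hs Hn.
  assert (Hpow : 0 < Rpower (INR n) (- s)) by apply Rpower_pos.
  assert (Hinv : 0 < / s) by (apply Rinv_0_lt_compat, Hs).
  destruct k as [|k]; cbn [sum_range]; [nra|].
  pose proof (p_series_tail_succ s n k Hs Hn).
  assert (Rpower (INR n) (- (s + 1)) <= Rpower (INR n) (- s)).
  { apply Rle_Rpower; [apply (le_INR 1); lia | lra]. }
  lra.
Qed.

Lemma tail_power_bound (q c : R) (n N : nat) : 1 < q -> 0 < c -> (1 <= n <= N)%nat ->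
  Rpower (sum_from_to (fun j => Rpower (c / INR j) q) n N) (/ (q - 1))
  <= Rpower c (q / (q - 1)) * Rpower (q / (q - 1)) (/ (q - 1)) / INR n.
Proof.
  intros Hq Hc Hn.
  assert (Hs : 0 < q - 1) by lra.
  assert (Hn0 : 0 < INR n) by (apply lt_0_INR; lia).
  unfold sum_from_to.
  set (T := sum_range (fun j => Rpower (c / INR j) q) n (S N - n)).
  assert (HT : T = Rpower c q
                   * sum_range (fun j => Rpower (INR j) (- ((q - 1) + 1))) n (S N - n)).
  { unfold T; rewrite <- sum_range_mulr; apply sum_range_ext; intros j Hj.
    rewrite Rpower_div by (exact Hc || (apply lt_0_INR; lia)).
    do 2 f_equal; ring. }
  assert (HTpos : 0 < T).
  { apply sum_range_pos; [intros; apply Rpower_pos | lia]. }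
  assert (HTle : T <= Rpower c q * ((1 + / (q - 1)) * Rpower (INR n) (- (q - 1)))).
  { rewrite HT; apply Rmult_le_compat_l; [apply Rlt_le, Rpower_pos|].
    apply p_series_tail; [exact Hs | lia]. }
  eapply Rle_trans.
  { apply Rle_Rpower_l; [apply Rlt_le, Rinv_0_lt_compat, Hs | split; [exact HTpos | exact HTle]]. }
  right.
  assert (H1s : 0 < 1 + / (q - 1)) by (pose proof (Rinv_0_lt_compat _ Hs); lra).
  assert (Hpos : 0 < (1 + / (q - 1)) * Rpower (INR n) (- (q - 1)))
    by (apply Rmult_lt_0_compat; [exact H1s | apply Rpower_pos]).
  rewrite <- (Rpower_mult_distr (Rpower c q)), <- Rpower_mult_distr, !Rpower_mult
    by (exact H1s || exact Hpos || apply Rpower_pos).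
  replace (1 + / (q - 1)) with (q / (q - 1)) by (field; lra).
  replace (- (q - 1) * / (q - 1)) with (- (1)) by (field; lra).
  rewrite Rpower_Ropp, Rpower_1 by exact Hn0.
  unfold Rdiv; ring.
Qed.

Lemma sum_tail_power_bound (q c : R) (N : nat) : 1 < q -> 0 < c ->
  sum_from_to (fun n => Rpower (sum_from_to (fun j => Rpower (c / INR j) q) n N) (/ (q - 1))) 1 N
  <= Rpower c (q / (q - 1)) * Rpower (q / (q - 1)) (/ (q - 1)) * harmonic N.
Proof.
  intros Hq Hc.
  unfold harmonic; rewrite !sum_from_to_1, <- sum_range_mulr.
  apply sum_range_le; intros n Hn.
  apply tail_power_bound; auto; lia.
Qed.

Lemma conjugate_exponent (p q : R) : 1 < p -> / p + / q = 1 -> 1 < q /\ p = q / (q - 1).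
Proof.
  intros Hp Hpq.
  assert (Hq0 : q <> 0).
  { intros ->; rewrite Rinv_0, Rplus_0_r in Hpq.
    rewrite <- (Rinv_inv p), Hpq, Rinv_1 in Hp; lra. }
  assert (Hq : q = p / (p - 1)).
  { rewrite <- (Rinv_inv q); replace (/ q) with (1 - / p) by lra; field; lra. }
  assert (Hq1 : 1 < q).
  { rewrite Hq; apply (Rmult_lt_reg_r (p - 1)); [lra|].
    unfold Rdiv; rewrite Rmult_assoc, Rinv_l by lra; lra. }
  split; [exact Hq1|].
  rewrite Hq; field; lra.
Qed.

Lemma harmonic_power_unbounded (X e : R) : 0 < X -> 0 < e ->
  exists N, 0 < harmonic N /\ X < Rpower (harmonic N) e.
Proof.
  intros HX He.
  destruct (harmonic_unbounded (Rpower X (/ e))) as [N HH].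
  pose proof (Rpower_pos X (/ e)) as HXe.
  exists N; split; [lra|].
  rewrite <- (Rpower_inv_exponent X e) at 1 by lra.
  apply Rlt_Rpower_l; lra.
Qed.

Lemma Rpower_div_mul_base (B H p : R) : 0 < B -> 0 < H ->
  Rpower (B / H) p * H = Rpower B p / Rpower H (p - 1).
Proof.
  intros HB HH.
  rewrite Rpower_div by assumption.
  rewrite <- (Rpower_1 H) at 2 by exact HH.
  rewrite Rmult_assoc, <- Rpower_plus.
  replace (- p + 1) with (- (p - 1)) by ring.
  rewrite Rpower_Ropp; reflexivity.
Qed.

Lemma Rpower_div_mul_base_lt (B H K e p : R) : 0 < B -> 0 < H -> 0 < e ->
  Rpower B p * K / Rpower e p < Rpower H (p - 1) -> Rpower (B / H) p * K * H < Rpower e p.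
Proof.
  intros HB HH He Hlt.
  replace (Rpower (B / H) p * K * H) with (Rpower (B / H) p * H * K) by ring.
  rewrite Rpower_div_mul_base by assumption.
  pose proof (Rpower_pos e p); pose proof (Rpower_pos H (p - 1)).
  apply (Rmult_lt_reg_r (Rpower H (p - 1))); [assumption|].
  replace (Rpower B p / Rpower H (p - 1) * K * Rpower H (p - 1))
    with (Rpower B p * K / Rpower e p * Rpower e p) by (field; lra).
  nra.
Qed.

Theorem lemma3p1 :
  forall (eps p q : R), 0 < eps -> 1 < p -> / p + / q = 1 ->
  exists (N : nat) (a : nat -> R),
    (forall n, (1 <= n <= N)%nat -> 0 < a n) /\
    (forall n, (1 <= n < N)%nat -> a (S n) <= a n) /\
    sum_from_to a 1 N > / (eps ^ 2) /\
    sum_from_to (fun n => Rpower (sum_from_to (fun j => Rpower (a j) q) n N) (p / q)) 1 N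
      < Rpower eps p.
Proof.
  intros eps p q Heps Hp Hpq.
  destruct (conjugate_exponent p q Hp Hpq) as [Hq Hp_eq].
  assert (Hr : p / q = / (q - 1)) by (rewrite Hp_eq; field; lra).
  set (B := 2 / eps ^ 2).
  assert (HB : 0 < B) by (apply Rdiv_lt_0_compat; [lra | apply pow_lt, Heps]).
  set (K := Rpower p (/ (q - 1))).
  set (X := Rpower B p * K / Rpower eps p).
  assert (HX : 0 < X) by (apply Rdiv_lt_0_compat; [apply Rmult_lt_0_compat|]; apply Rpower_pos).
  destruct (harmonic_power_unbounded X (p - 1) HX ltac:(lra)) as [N [HH HXH]].
  set (H := harmonic N) in *.
  assert (Hc : 0 < B / H) by (apply Rdiv_lt_0_compat; assumption).
  exists N, (fun j => B / H / INR j).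
  split; [|split; [|split]].
  - intros n Hn; apply Rdiv_lt_0_compat; [exact Hc | apply lt_0_INR; lia].
  - intros n Hn; apply Rmult_le_compat_l; [lra|].
    apply Rinv_le_contravar; [apply lt_0_INR; lia | rewrite S_INR; lra].
  - rewrite sum_from_to_1, (sum_range_mulr (B / H) (fun j => / INR j)).
    replace (sum_range (fun j => / INR j) 1 N) with H by (unfold H, harmonic; apply sum_from_to_1).
    replace (B / H * H) with B by (field; lra).
    unfold B; pose proof (Rinv_0_lt_compat _ (pow_lt _ 2 Heps)); unfold Rdiv; lra.
  - rewrite Hr.
    eapply Rle_lt_trans; [apply sum_tail_power_bound; [exact Hq | exact Hc]|].
    rewrite <- Hp_eq; fold K H.
    apply Rpower_div_mul_base_lt; assumption.
Qed.
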